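(* Let $Y$ be a first-countable topological space such that $\mathrm{H}_1([0,1],Y)\subseteq \mathrm{B}_1([0,1],Y)$. Then $Y$ is almost arcwise connected and locally almost arcwise connected.
   Context: $\mathrm{H}_1(X,Y)$: mappings $f:X\to Y$ with $f^{-1}(V)$ an $F_\sigma$-set for every open $V\subseteq Y$. $\mathrm{B}_1(X,Y)$: pointwise limits of sequences of continuous mappings $X\to Y$. Two sets $A,B$ are joined by an arc in a set $S$ if there is a continuous $\gamma:[0,1]\to Y$ with $\gamma([0,1])\subseteq S$, $\gamma(0)\in A$, $\gamma(1)\in B$. $Y$ is almost arcwise connected if each pair of nonempty open subsets of $Y$ can be joined by an arc in $Y$. $Y$ is locally almost arcwise connected at $y$ if for every neighborhood $V$ of $y$ there is a neighborhood $U\subseteq V$ of $y$ such that each pair of nonempty open subsets of $U$ can be joined by an arc in $\overline V$; locally almost arcwise connected means this holds at every point. *)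

From Stdlib Require Import Reals.
Open Scope R_scope.

Record topology (T : Type) := Topology {
  open : (T -> Prop) -> Prop;
  open_full : open (fun _ => True);
  open_inter : forall U V, open U -> open V -> open (fun x => U x /\ V x);
  open_union : forall F : (T -> Prop) -> Prop,
      (forall U, F U -> open U) -> open (fun x => exists U, F U /\ U x)
}.
Arguments open {T} t U.

Definition first_countable {Y : Type} (tY : topology Y) : Prop :=
  forall y : Y, exists B : nat -> (Y -> Prop),
    (forall n, open tY (B n) /\ B n y) /\
    (forall U, open tY U -> U y -> exists n, forall z, B n z -> U z).

Definition I01 : Type := { x : R | 0 <= x <= 1 }.

Definition open01 (U : I01 -> Prop) : Prop :=
  forall x : I01, U x -> exists eps : R, eps > 0 /\
    forall t : I01, Rabs (proj1_sig t - proj1_sig x) < eps -> U t.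

Definition closed01 (C : I01 -> Prop) : Prop := open01 (fun x => ~ C x).

Definition Fsigma01 (A : I01 -> Prop) : Prop :=
  exists C : nat -> (I01 -> Prop), (forall n, closed01 (C n)) /\
    forall x, A x <-> exists n, C n x.

Definition continuous01 {Y : Type} (tY : topology Y) (f : I01 -> Y) : Prop :=
  forall V, open tY V -> open01 (fun x => V (f x)).

Definition converges {Y : Type} (tY : topology Y) (u : nat -> Y) (l : Y) : Prop :=
  forall V, open tY V -> V l -> exists N, forall n, (n >= N)%nat -> V (u n).

Definition Hclass1 {Y : Type} (tY : topology Y) (f : I01 -> Y) : Prop :=
  forall V, open tY V -> Fsigma01 (fun x => V (f x)).

Definition Bclass1 {Y : Type} (tY : topology Y) (f : I01 -> Y) : Prop :=
  exists fn : nat -> I01 -> Y, (forall n, continuous01 tY (fn n)) /\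
    forall x, converges tY (fun n => fn n x) (f x).

Definition joined_by_arc_in {Y : Type} (tY : topology Y)
    (A B S : Y -> Prop) : Prop :=
  exists gamma : I01 -> Y, continuous01 tY gamma /\
    (forall t, S (gamma t)) /\
    (exists t0 : I01, proj1_sig t0 = 0 /\ A (gamma t0)) /\
    (exists t1 : I01, proj1_sig t1 = 1 /\ B (gamma t1)).

Definition nonempty {Y : Type} (A : Y -> Prop) : Prop := exists y, A y.

Definition almost_arcwise_connected {Y : Type} (tY : topology Y) : Prop :=
  forall A B, open tY A -> nonempty A -> open tY B -> nonempty B ->
    joined_by_arc_in tY A B (fun _ => True).

Definition nbhd {Y : Type} (tY : topology Y) (V : Y -> Prop) (y : Y) : Prop :=
  exists W, open tY W /\ W y /\ forall z, W z -> V z.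

Definition closure {Y : Type} (tY : topology Y) (V : Y -> Prop) : Y -> Prop :=
  fun z => forall W, open tY W -> W z -> exists w, W w /\ V w.

Definition loc_almost_arcwise_connected_at {Y : Type} (tY : topology Y)
    (y : Y) : Prop :=
  forall V, nbhd tY V y -> exists U, nbhd tY U y /\ (forall z, U z -> V z) /\
    forall A B, open tY A -> nonempty A -> (forall z, A z -> U z) ->
                open tY B -> nonempty B -> (forall z, B z -> U z) ->
      joined_by_arc_in tY A B (closure tY V).

Definition loc_almost_arcwise_connected {Y : Type} (tY : topology Y) : Prop :=
  forall y, loc_almost_arcwise_connected_at tY y.

(* Suppose the local property fails at y for a neighbourhood V. Then there are nonempty open
   A_n, B_n shrinking to y that cannot be joined by an arc in cl V.  Let f equal y except at an
   injective sequence of pairs p_n, q_n meeting every subinterval of [0,1], with f(p_n) in A_n and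
   f(q_n) in B_n.  Since these exceptional values converge to y, the preimage of an open set is
   open or countable, so f is in H_1, hence f = lim f_m with f_m continuous.  The closed sets
   E_k = {x | f_m(x) in cl V for all m >= k} cover [0,1], so by Baire one of them contains an
   interval; for a pair (p_n, q_n) in that interval and m large, f_m restricted to [p_n, q_n]
   joins A_n to B_n inside cl V.  Almost arcwise connectedness is easier: if f is a point of A
   except f(1) in B, a late f_m is itself the arc. *)

From Stdlib Require Import Reals Lra Lia List ZArith Cantor Classical ClassicalEpsilon
  ProofIrrelevance FunctionalExtensionality PropExtensionality.
Open Scope R_scope.

(** * Closed and F_sigma subsets of [0,1] *)

Lemma I01_eq (x y : I01) : proj1_sig x = proj1_sig y -> x = y.
Proof.
  destruct x as [x hx], y as [y hy]; simpl; intros ->.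
  f_equal; apply proof_irrelevance.
Qed.

Lemma closed01_forall (A : Type) (C : A -> I01 -> Prop) :
  (forall a, closed01 (C a)) -> closed01 (fun x => forall a, C a x).
Proof.
  intros HC x Hx.
  apply not_all_ex_not in Hx as [a Ha].
  destruct (HC a x Ha) as [e [He HCe]].
  exists e; split; [exact He|]. intros t Ht Hall. exact (HCe t Ht (Hall a)).
Qed.

Lemma closed01_subset_point (C : I01 -> Prop) (p : R) :
  (forall x, C x -> proj1_sig x = p) -> closed01 C.
Proof.
  intros HC x Hx. destruct (Req_dec (proj1_sig x) p) as [Exp|Nxp].
  - exists 1; split; [lra|]. intros t _ Ct. apply Hx.
    replace x with t; [exact Ct|]. apply I01_eq. rewrite (HC t Ct); auto.
  - exists (Rabs (proj1_sig x - p)). split; [apply Rabs_pos_lt; lra|].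
    intros t Ht Ct. rewrite (HC t Ct), Rabs_minus_sym in Ht. lra.
Qed.

Lemma open01_Fsigma01 (U : I01 -> Prop) : open01 U -> Fsigma01 U.
Proof.
  intros HU.
  exists (fun j x => forall t : I01,
    Rabs (proj1_sig t - proj1_sig x) < / INR (S j) -> U t).
  split.
  - intros j x Hx. apply not_all_ex_not in Hx as [t Ht].
    apply imply_to_and in Ht as [Htx NUt].
    exists (/ INR (S j) - Rabs (proj1_sig t - proj1_sig x)). split; [lra|].
    intros x' Hx' Hall. apply NUt, Hall.
    pose proof (Rdist_tri (proj1_sig t) (proj1_sig x') (proj1_sig x)) as Htri.
    unfold Rdist in Htri. rewrite (Rabs_minus_sym (proj1_sig x)) in Htri. lra.
  - intros x. split.
    + intros Ux. destruct (HU x Ux) as [e [He HUe]].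
      destruct (archimed_cor1 e He) as [N [HN HN0]].
      exists (pred N). replace (S (pred N)) with N by lia.
      intros t Ht. apply HUe. lra.
    + intros [j Hj]. apply Hj. rewrite Rminus_diag, Rabs_R0.
      apply Rinv_0_lt_compat, lt_0_INR; lia.
Qed.

Lemma finite_avoiding_radius (s : nat -> R) (N : nat) (x : R) :
  exists e, e > 0 /\ forall n, (n < N)%nat -> s n <> x -> e <= Rabs (s n - x).
Proof.
  induction N as [|N [e [He HN]]].
  - exists 1; split; [lra|]. intros; lia.
  - destruct (Req_dec (s N) x) as [E|NE].
    + exists e; split; [exact He|]. intros n Hn Hne.
      destruct (Nat.eq_dec n N) as [->|]; [contradiction|]. apply HN; [lia|exact Hne].
    + exists (Rmin e (Rabs (s N - x))). split.
      * apply Rmin_pos; [lra|apply Rabs_pos_lt; lra].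
      * intros n Hn Hne. destruct (Nat.eq_dec n N) as [->|].
        -- apply Rmin_r.
        -- eapply Rle_trans; [apply Rmin_l|]. apply HN; [lia|exact Hne].
Qed.

Lemma Hclass1_of_convergent_exceptions {Y : Type} (tY : topology Y)
    (f : I01 -> Y) (y : Y) (s : nat -> R) (c : nat -> Y) :
  (forall x, f x = y \/ exists i, proj1_sig x = s i /\ f x = c i) ->
  converges tY c y -> Hclass1 tY f.
Proof.
  intros Hf Hc O HO. destruct (classic (O y)) as [Oy|NOy].
  - (* only the finitely many points [s i], [i < N], can leave [O], so its preimage is open *)
    apply open01_Fsigma01. destruct (Hc O HO Oy) as [N HN].
    intros x Ox. destruct (finite_avoiding_radius s N (proj1_sig x)) as [e [He Hes]].
    exists e; split; [exact He|]. intros t Ht.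
    destruct (Hf t) as [-> | [i [Eti Eci]]]; [exact Oy|].
    destruct (Nat.lt_ge_cases i N) as [Hi|Hi]; [|rewrite Eci; apply HN; lia].
    destruct (Req_dec (s i) (proj1_sig x)) as [E|NE].
    + replace t with x; [exact Ox|]. apply I01_eq. congruence.
    + specialize (Hes i Hi NE). rewrite <- Eti in Hes. lra.
  - exists (fun i x => proj1_sig x = s i /\ O (f x)). split.
    + intro i. apply (closed01_subset_point _ (s i)). intros x [E _]; exact E.
    + intro x. split.
      * intro Ox. destruct (Hf x) as [E | [i [Exi _]]]; [congruence|eauto].
      * intros [i [_ Ox]]; exact Ox.
Qed.

(** * The Baire property of [0,1] *)

Lemma subinterval_avoiding_closed (C : I01 -> Prop) (I : R * R) (x : I01) :
  closed01 C -> fst I < snd I -> fst I <= proj1_sig x <= snd I -> ~ C x ->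
  exists J : R * R, fst I <= fst J < snd J /\ snd J <= snd I /\
    forall t : I01, fst J <= proj1_sig t <= snd J -> ~ C t.
Proof.
  intros HC HI Hx NCx. destruct (HC x NCx) as [e [He HCe]].
  exists (Rmax (fst I) (proj1_sig x - e / 2), Rmin (snd I) (proj1_sig x + e / 2)); simpl.
  pose proof (Rmax_l (fst I) (proj1_sig x - e / 2)).
  pose proof (Rmax_r (fst I) (proj1_sig x - e / 2)).
  pose proof (Rmin_l (snd I) (proj1_sig x + e / 2)).
  pose proof (Rmin_r (snd I) (proj1_sig x + e / 2)).
  split; [split|split]; auto.
  - apply Rmax_lub_lt; apply Rmin_glb_lt; lra.
  - intros t Ht. apply HCe, Rabs_def1; lra.
Qed.

Lemma nested_intervals_meet (l r : nat -> R) :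
  (forall n, l n <= l (S n)) -> (forall n, r (S n) <= r n) ->
  (forall n, l n <= r n) -> exists z, forall n, l n <= z <= r n.
Proof.
  intros Hl Hr Hlr.
  assert (Hmono : forall n m, (n <= m)%nat -> l n <= l m /\ r m <= r n).
  { intros n m Hnm; induction Hnm as [|m _ IH]; [lra|].
    specialize (Hl m); specialize (Hr m); lra. }
  assert (Hcross : forall n m, l n <= r m).
  { intros n m. pose proof (Hlr n); pose proof (Hlr m).
    destruct (Nat.le_ge_cases n m) as [Hnm|Hnm]; destruct (Hmono _ _ Hnm); lra. }
  destruct (completeness (fun z => exists n, z = l n)) as [z [Hub Hleast]].
  - exists (r O). intros _ [n ->]. apply Hcross.
  - exists (l O), O. reflexivity.
  - exists z. intro n. split.
    + apply Hub. now exists n.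
    + apply Hleast. intros _ [m ->]. apply Hcross.
Qed.

Fixpoint iterate_intervals (G : nat -> R * R -> R * R) (n : nat) : R * R :=
  match n with O => (0, 1) | S k => G k (iterate_intervals G k) end.

Lemma closed_cover_contains_interval (E : nat -> I01 -> Prop) :
  (forall k, closed01 (E k)) -> (forall x, exists k, E k x) ->
  exists k l r, 0 <= l < r /\ r <= 1 /\
    forall x : I01, l <= proj1_sig x <= r -> E k x.
Proof.
  intros HE Hcov. apply NNPP; intro Hno.
  set (proper (I : R * R) := 0 <= fst I < snd I /\ snd I <= 1).
  set (shrinks k (I J : R * R) := fst I <= fst J < snd J /\ snd J <= snd I /\
    forall t : I01, fst J <= proj1_sig t <= snd J -> ~ E k t).
  assert (Hstep : forall kI : nat * (R * R), exists J,
    proper (snd kI) -> shrinks (fst kI) (snd kI) J).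
  { intros [k I]; simpl. destruct (classic (proper I)) as [HI|HI]; [|exists I; tauto].
    assert (Hx : exists x : I01, fst I <= proj1_sig x <= snd I /\ ~ E k x).
    { apply NNPP; intro Hall. apply Hno. exists k, (fst I), (snd I).
      split; [apply HI|]. split; [apply HI|].
      intros x Hx. apply NNPP; intro NEx. apply Hall; eauto. }
    destruct Hx as [x [Hx NEx]].
    destruct (subinterval_avoiding_closed (E k) I x (HE k)) as [J HJ]; auto.
    - apply HI.
    - exists J; auto. }
  destruct (choice _ Hstep) as [G HG].
  set (I := iterate_intervals (fun k J => G (k, J))).
  assert (HI : forall n, proper (I n) /\ shrinks n (I n) (I (S n))).
  { induction n as [|n [IHp _]].
    - assert (H0 : proper (I O)) by (unfold I, proper; simpl; lra).
      split; [exact H0|]. exact (HG (O, I O) H0).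
    - assert (Hp : proper (I (S n))).
      { change (I (S n)) with (G (n, I n)).
        destruct (HG (n, I n) IHp) as [H1 [H2 _]]. destruct IHp as [[H0 _] H3].
        simpl in *. split; [split|]; lra. }
      split; [exact Hp|]. exact (HG (S n, I (S n)) Hp). }
  destruct (nested_intervals_meet (fun n => fst (I n)) (fun n => snd (I n)))
    as [z Hz].
  - intro n. apply (HI n).
  - intro n. apply (HI n).
  - intro n. destruct (HI n) as [[? _] _]. lra.
  - assert (Hz01 : 0 <= z <= 1) by (specialize (Hz O); simpl in Hz; lra).
    destruct (Hcov (exist _ z Hz01)) as [k Hk].
    destruct (HI k) as [_ [_ [_ Hav]]].
    exact (Hav (exist _ z Hz01) (Hz (S k)) Hk).
Qed.

(** * An injective sequence with a pair of points in every interval *)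

Definition rational_interval (n : nat) : R * R :=
  let (k, j) := Cantor.of_nat n in (INR j / INR (S k), INR (S j) / INR (S k)).

Lemma rational_interval_lt (n : nat) :
  fst (rational_interval n) < snd (rational_interval n).
Proof.
  unfold rational_interval; destruct (Cantor.of_nat n) as [k j]; cbn [fst snd].
  apply Rmult_lt_compat_r; [apply Rinv_0_lt_compat, lt_0_INR; lia|].
  apply lt_INR; lia.
Qed.

Lemma rational_interval_dense (l r : R) : 0 <= l < r ->
  exists n, l <= fst (rational_interval n) /\ snd (rational_interval n) <= r.
Proof.
  intros Hlr.
  destruct (archimed_cor1 ((r - l) / 2)) as [N [HN HN0]]; [lra|].
  set (s := INR N).
  assert (Hs : 0 < s) by (apply lt_0_INR; lia).
  assert (Hss : s * / s = 1) by (field; lra).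
  assert (Hs' : 0 < / s) by (apply Rinv_0_lt_compat; lra).
  assert (Hgap : 2 < (r - l) * s).
  { assert (s * / s < s * ((r - l) / 2)) by (apply Rmult_lt_compat_l; [lra|exact HN]). lra. }
  destruct (archimed (l * s)) as [Hup1 Hup2].
  set (z := up (l * s)) in *.
  assert (Hz : (0 <= z)%Z) by (apply le_IZR; nra).
  exists (Cantor.to_nat (pred N, Z.to_nat z)).
  unfold rational_interval. rewrite Cantor.cancel_of_to; cbn [fst snd].
  replace (S (pred N)) with N by lia. fold s.
  rewrite S_INR, INR_IZR_INZ, Z2Nat.id by exact Hz.
  unfold Rdiv. split; nra.
Qed.

Lemma exists_subinterval_avoiding (L : list R) (l r : R) : l < r ->
  exists l' r', l <= l' < r' /\ r' <= r /\ forall x, l' <= x <= r' -> ~ In x L.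
Proof.
  revert l r; induction L as [|z L IH]; intros l r Hlr.
  - exists l, r. split; [lra|]. split; [lra|]. intros x _ [].
  - destruct (IH l r Hlr) as [l1 [r1 [H1 [H2 H3]]]].
    destruct (Rlt_le_dec z ((l1 + r1) / 2)).
    + exists ((l1 + r1) / 2), r1. split; [lra|]. split; [lra|].
      intros x Hx [E|E]; [lra|]. apply (H3 x); [lra|exact E].
    + exists l1, ((3 * l1 + r1) / 4). split; [lra|]. split; [lra|].
      intros x Hx [E|E]; [lra|]. apply (H3 x); [lra|exact E].
Qed.

Fixpoint prefix_values (pick : nat -> list R -> R) (n : nat) : list R :=
  match n with
  | O => nil
  | S k => pick k (prefix_values pick k) :: prefix_values pick k
  end.

Lemma exists_injective_selection (l r : nat -> R) :
  (forall n, l n < r n) ->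
  exists s : nat -> R, (forall i j, s i = s j -> i = j) /\ forall n, l n <= s n <= r n.
Proof.
  intros Hlr.
  assert (Hpick : forall nL : nat * list R, exists x,
    l (fst nL) <= x <= r (fst nL) /\ ~ In x (snd nL)).
  { intros [n L]; simpl.
    destruct (exists_subinterval_avoiding L (l n) (r n) (Hlr n))
      as [l' [r' [H1 [H2 H3]]]].
    exists l'. split; [lra|]. apply H3; lra. }
  destruct (choice _ Hpick) as [pick Hpick'].
  set (P := prefix_values (fun n L => pick (n, L))).
  exists (fun n => pick (n, P n)).
  assert (Hin : forall n m, (m < n)%nat -> In (pick (m, P m)) (P n)).
  { induction n as [|n IH]; intros m Hm; [lia|].
    destruct (Nat.eq_dec m n) as [->|Hne]; [now left|].
    right. apply IH; lia. }
  split.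
  - intros i j Eij.
    destruct (Nat.lt_total i j) as [Hij|[Hij|Hij]]; [exfalso| exact Hij |exfalso].
    + apply (proj2 (Hpick' (j, P j))). simpl. rewrite <- Eij. now apply Hin.
    + apply (proj2 (Hpick' (i, P i))). simpl. rewrite Eij. now apply Hin.
  - intro n. apply (Hpick' (n, P n)).
Qed.

Lemma exists_injective_dense_pairs : exists s : nat -> R,
  (forall i j, s i = s j -> i = j) /\
  forall l r, 0 <= l < r -> exists n,
    l <= s (2 * n)%nat <= r /\ l <= s (2 * n + 1)%nat <= r.
Proof.
  destruct (exists_injective_selection
    (fun i => fst (rational_interval (Nat.div2 i)))
    (fun i => snd (rational_interval (Nat.div2 i))))
    as [s [Hinj Hs]].
  { intro; apply rational_interval_lt. }
  exists s. split; [exact Hinj|].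
  intros l r Hlr. destruct (rational_interval_dense l r Hlr) as [n [Hl Hr]].
  exists n. specialize (Hs (2 * n)%nat) as Hp. specialize (Hs (2 * n + 1)%nat) as Hq.
  rewrite Nat.div2_double in Hp. rewrite Nat.div2_odd' in Hq. lra.
Qed.

(** * Arcs from functions of the first Baire class *)

Definition seq_extend {Y : Type} (s : nat -> R) (c : nat -> Y) (y : Y) (x : I01) : Y :=
  match excluded_middle_informative (exists i, proj1_sig x = s i) with
  | left H => c (proj1_sig (constructive_indefinite_description _ H))
  | right _ => y
  end.

Lemma seq_extend_cases {Y : Type} (s : nat -> R) (c : nat -> Y) (y : Y) (x : I01) :
  seq_extend s c y x = y \/ exists i, proj1_sig x = s i /\ seq_extend s c y x = c i.
Proof.
  unfold seq_extend. destruct excluded_middle_informative as [H|H]; [right|now left].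
  destruct constructive_indefinite_description as [i Hi]; simpl. eauto.
Qed.

Lemma seq_extend_at {Y : Type} (s : nat -> R) (c : nat -> Y) (y : Y) (x : I01) (i : nat) :
  (forall i j, s i = s j -> i = j) -> proj1_sig x = s i -> seq_extend s c y x = c i.
Proof.
  intros Hinj Hxi. unfold seq_extend. destruct excluded_middle_informative as [H|H].
  - destruct constructive_indefinite_description as [j Hj]; simpl.
    f_equal. apply Hinj; congruence.
  - exfalso; eauto.
Qed.

Definition interleave {Y : Type} (a b : nat -> Y) (i : nat) : Y :=
  if Nat.odd i then b (Nat.div2 i) else a (Nat.div2 i).

Section SpaceY.
Context {Y : Type} (tY : topology Y).

Lemma open_ext (U V : Y -> Prop) : (forall z, U z <-> V z) -> open tY U -> open tY V.
Proof.
  intros HUV HU. replace V with U; [exact HU|].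
  apply functional_extensionality; intro z. apply propositional_extensionality, HUV.
Qed.

Lemma subset_closure (V : Y -> Prop) (z : Y) : V z -> closure tY V z.
Proof. intros Vz W _ Wz. now exists z. Qed.

Lemma closure_monotone (V V' : Y -> Prop) (z : Y) :
  (forall w, V w -> V' w) -> closure tY V z -> closure tY V' z.
Proof.
  intros HVV' Hz W HW Wz. destruct (Hz W HW Wz) as [w [Ww Vw]]. exists w; auto.
Qed.

Lemma open_not_closure (V : Y -> Prop) : open tY (fun z => ~ closure tY V z).
Proof.
  apply (open_ext (fun z => exists W, (open tY W /\ forall w, W w -> ~ V w) /\ W z)).
  - intro z. split.
    + intros [W [[HW HWV] Wz]] Hz. destruct (Hz W HW Wz) as [w [Ww Vw]].
      exact (HWV w Ww Vw).
    + intro Hz. apply not_all_ex_not in Hz as [W HW].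
      apply imply_to_and in HW as [HWo HW]. apply imply_to_and in HW as [Wz HW].
      exists W. split; [split|]; auto. intros w Ww Vw. apply HW. eauto.
  - apply open_union. intros W [HW _]; exact HW.
Qed.

Lemma closed01_preimage_closure (g : I01 -> Y) (V : Y -> Prop) :
  continuous01 tY g -> closed01 (fun x => closure tY V (g x)).
Proof. intro Hg. exact (Hg _ (open_not_closure V)). Qed.

Lemma continuous01_comp_affine (g : I01 -> Y) (h : I01 -> I01) (u v : R) :
  (forall t, proj1_sig (h t) = u + proj1_sig t * (v - u)) ->
  continuous01 tY g -> continuous01 tY (fun t => g (h t)).
Proof.
  intros Hh Hg O HO t Ot. destruct (Hg O HO (h t) Ot) as [e [He HOe]].
  assert (Hc : 0 < Rabs (v - u) + 1) by (pose proof (Rabs_pos (v - u)); lra).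
  exists (e / (Rabs (v - u) + 1)). split; [apply Rdiv_lt_0_compat; lra|].
  intros t' Ht'. apply HOe. rewrite !Hh.
  replace (u + proj1_sig t' * (v - u) - (u + proj1_sig t * (v - u)))
    with ((proj1_sig t' - proj1_sig t) * (v - u)) by ring.
  rewrite Rabs_mult.
  apply (Rmult_lt_compat_r (Rabs (v - u) + 1)) in Ht'; [|lra].
  replace (e / (Rabs (v - u) + 1) * (Rabs (v - u) + 1)) with e in Ht' by (field; lra).
  pose proof (Rabs_pos (proj1_sig t' - proj1_sig t)). nra.
Qed.

Lemma joined_by_subpath (g : I01 -> Y) (A B S : Y -> Prop) (l r : R) (p q : I01) :
  continuous01 tY g -> (forall x : I01, l <= proj1_sig x <= r -> S (g x)) ->
  l <= proj1_sig p <= r -> l <= proj1_sig q <= r -> A (g p) -> B (g q) ->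
  joined_by_arc_in tY A B S.
Proof.
  intros Hg HS Hp Hq Ap Bq.
  destruct p as [u hu], q as [v hv]; simpl in Hp, Hq.
  assert (Hseg : forall t : I01, l <= u + proj1_sig t * (v - u) <= r).
  { intros [t ht]; simpl.
    assert (0 <= t * (v - l) /\ 0 <= (1 - t) * (u - l)) as [] by (split; apply Rmult_le_pos; lra).
    assert (0 <= t * (r - v) /\ 0 <= (1 - t) * (r - u)) as [] by (split; apply Rmult_le_pos; lra).
    split; nra. }
  assert (H01 : forall t : I01, 0 <= u + proj1_sig t * (v - u) <= 1).
  { intros [t ht]; simpl.
    assert (0 <= t * v /\ 0 <= (1 - t) * u) as [] by (split; apply Rmult_le_pos; lra).
    assert (0 <= t * (1 - v) /\ 0 <= (1 - t) * (1 - u)) as [] by (split; apply Rmult_le_pos; lra).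
    split; nra. }
  set (h := fun t : I01 => exist (fun x => 0 <= x <= 1) _ (H01 t) : I01).
  assert (h0 : 0 <= 0 <= 1) by lra. assert (h1 : 0 <= 1 <= 1) by lra.
  exists (fun t => g (h t)). split; [|split; [|split]].
  - exact (continuous01_comp_affine g h u v (fun t => eq_refl) Hg).
  - intro t. apply HS, Hseg.
  - exists (exist _ 0 h0). split; [reflexivity|].
    replace (h (exist _ 0 h0)) with (exist (fun x => 0 <= x <= 1) u hu); [exact Ap|].
    apply I01_eq; simpl; ring.
  - exists (exist _ 1 h1). split; [reflexivity|].
    replace (h (exist _ 1 h1)) with (exist (fun x => 0 <= x <= 1) v hv); [exact Bq|].
    apply I01_eq; simpl; ring.
Qed.

Lemma joined_by_arc_in_mono (A B S S' : Y -> Prop) :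
  (forall z, S z -> S' z) -> joined_by_arc_in tY A B S -> joined_by_arc_in tY A B S'.
Proof. intros HSS' [g [Hg [HS Hends]]]. exists g; auto. Qed.

Lemma open_inter_prefix (W : Y -> Prop) (Bs : nat -> Y -> Prop) (n : nat) :
  open tY W -> (forall m, open tY (Bs m)) ->
  open tY (fun z => W z /\ forall m, (m < n)%nat -> Bs m z).
Proof.
  intros HW HBs. induction n as [|n IH].
  - apply (open_ext W); [|exact HW]. intro z. split; [|tauto].
    intro Wz; split; [exact Wz|intros; lia].
  - apply (open_ext (fun z => (W z /\ forall m, (m < n)%nat -> Bs m z) /\ Bs n z)).
    + intro z. split.
      * intros [[Wz HB] Bn]. split; [exact Wz|]. intros m Hm.
        destruct (Nat.eq_dec m n) as [->|]; [exact Bn|apply HB; lia].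
      * intros [Wz HB]. split; [split; [exact Wz|intros m Hm; apply HB; lia]|apply HB; lia].
    + apply open_inter; [exact IH|apply HBs].
Qed.

Lemma decreasing_local_base (W : Y -> Prop) (y : Y) :
  first_countable tY -> open tY W -> W y ->
  exists U : nat -> Y -> Prop,
    (forall n, open tY (U n) /\ U n y /\ forall z, U n z -> W z) /\
    forall a : nat -> Y, (forall n, U n (a n)) -> converges tY a y.
Proof.
  intros HFC HW Wy. destruct (HFC y) as [Bs [HBs Hbase]].
  exists (fun n z => W z /\ forall m, (m < n)%nat -> Bs m z). split.
  - intro n. split; [apply open_inter_prefix; [exact HW|apply HBs]|].
    split; [split; [exact Wy|intros m _; apply HBs]|intros z [Wz _]; exact Wz].
  - intros a Ha O HO Oy. destruct (Hbase O HO Oy) as [N HN].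
    exists (S N). intros n Hn. apply HN, (proj2 (Ha n)). lia.
Qed.

Lemma converges_interleave (a b : nat -> Y) (y : Y) :
  converges tY a y -> converges tY b y -> converges tY (interleave a b) y.
Proof.
  intros Ha Hb O HO Oy.
  destruct (Ha O HO Oy) as [Na HNa], (Hb O HO Oy) as [Nb HNb].
  exists (2 * (Na + Nb))%nat. intros i Hi. unfold interleave.
  pose proof (Nat.div2_odd i) as Ei.
  destruct (Nat.odd i); simpl in Ei; [apply HNb|apply HNa]; lia.
Qed.

Lemma almost_arcwise_connected_of_H1_B1 :
  (forall f, Hclass1 tY f -> Bclass1 tY f) -> almost_arcwise_connected tY.
Proof.
  intros HHB A B HA [a Aa] HB [b Bb].
  set (f (x : I01) := if Req_EM_T (proj1_sig x) 1 then b else a).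
  destruct (HHB f) as [fn [Hfn Hconv]].
  { apply (Hclass1_of_convergent_exceptions tY f a (fun _ => 1)
      (fun i => match i with O => b | S _ => a end)).
    - intro x. unfold f. destruct Req_EM_T as [E|E]; [right; now exists O|now left].
    - intros O HO Oa. exists 1%nat. intros [|n] Hn; [lia|exact Oa]. }
  assert (h0 : 0 <= 0 <= 1) by lra. assert (h1 : 0 <= 1 <= 1) by lra.
  set (x0 := exist (fun x => 0 <= x <= 1) 0 h0 : I01).
  set (x1 := exist (fun x => 0 <= x <= 1) 1 h1 : I01).
  destruct (Hconv x0 A HA) as [M0 HM0].
  { unfold f; simpl. destruct Req_EM_T; [lra|exact Aa]. }
  destruct (Hconv x1 B HB) as [M1 HM1].
  { unfold f; simpl. destruct Req_EM_T; [exact Bb|lra]. }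
  apply (joined_by_subpath (fn (M0 + M1)%nat) A B _ 0 1 x0 x1).
  - apply Hfn.
  - trivial.
  - simpl; lra.
  - simpl; lra.
  - apply HM0; lia.
  - apply HM1; lia.
Qed.

Lemma shrinking_pairs_joined (W : Y -> Prop) (y : Y)
    (A B : nat -> Y -> Prop) (a b : nat -> Y) :
  (forall f, Hclass1 tY f -> Bclass1 tY f) -> open tY W -> W y ->
  (forall n, open tY (A n) /\ A n (a n) /\ W (a n)) ->
  (forall n, open tY (B n) /\ B n (b n) /\ W (b n)) ->
  converges tY a y -> converges tY b y ->
  exists n, joined_by_arc_in tY (A n) (B n) (closure tY W).
Proof.
  intros HHB HW Wy HA HB Ha Hb.
  destruct exists_injective_dense_pairs as [s [Hinj Hdense]].
  set (f := seq_extend s (interleave a b) y).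
  destruct (HHB f) as [fn [Hfn Hconv]].
  { apply (Hclass1_of_convergent_exceptions tY f y s (interleave a b)).
    - apply seq_extend_cases.
    - apply converges_interleave; assumption. }
  assert (HfW : forall x, W (f x)).
  { intro x. destruct (seq_extend_cases s (interleave a b) y x) as [E|[i [_ E]]];
      unfold f; rewrite E; [exact Wy|].
    unfold interleave; destruct Nat.odd; [apply HB|apply HA]. }
  destruct (closed_cover_contains_interval
    (fun k x => forall m, closure tY W (fn (k + m)%nat x))) as [k [l [r [Hlr [Hr HE]]]]].
  - intro k. apply closed01_forall. intro m. apply closed01_preimage_closure, Hfn.
  - intro x. destruct (Hconv x W HW (HfW x)) as [N HN].
    exists N. intro m. apply subset_closure, HN. lia.
  - destruct (Hdense l r Hlr) as [n [Hp Hq]].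
    assert (hp : 0 <= s (2 * n)%nat <= 1) by lra.
    assert (hq : 0 <= s (2 * n + 1)%nat <= 1) by lra.
    set (xp := exist (fun x => 0 <= x <= 1) _ hp : I01).
    set (xq := exist (fun x => 0 <= x <= 1) _ hq : I01).
    assert (fp : f xp = a n).
    { unfold f. rewrite (seq_extend_at _ _ _ xp (2 * n) Hinj eq_refl).
      unfold interleave. now rewrite Nat.odd_even, Nat.div2_double. }
    assert (fq : f xq = b n).
    { unfold f. rewrite (seq_extend_at _ _ _ xq (2 * n + 1) Hinj eq_refl).
      unfold interleave. now rewrite Nat.odd_odd, Nat.div2_odd'. }
    destruct (Hconv xp (A n)) as [Mp HMp]; [apply HA|rewrite fp; apply HA|].
    destruct (Hconv xq (B n)) as [Mq HMq]; [apply HB|rewrite fq; apply HB|].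
    exists n. apply (joined_by_subpath (fn (k + (Mp + Mq))%nat) _ _ _ l r xp xq).
    + apply Hfn.
    + intros x Hx. apply (HE x Hx).
    + exact Hp.
    + exact Hq.
    + apply HMp; lia.
    + apply HMq; lia.
Qed.

Lemma loc_almost_arcwise_connected_of_H1_B1 :
  first_countable tY -> (forall f, Hclass1 tY f -> Bclass1 tY f) ->
  loc_almost_arcwise_connected tY.
Proof.
  intros HFC HHB y V [W [HW [Wy HWV]]].
  destruct (decreasing_local_base W y HFC HW Wy) as [U [HU HUconv]].
  apply NNPP; intro Hno.
  assert (Hbad : forall n, exists AB : (Y -> Prop) * (Y -> Prop),
    (open tY (fst AB) /\ nonempty (fst AB) /\ forall z, fst AB z -> U n z) /\
    (open tY (snd AB) /\ nonempty (snd AB) /\ forall z, snd AB z -> U n z) /\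
    ~ joined_by_arc_in tY (fst AB) (snd AB) (closure tY V)).
  { intro n. apply NNPP; intro Hgood. apply Hno. exists (U n). split; [|split].
    - exists (U n). destruct (HU n) as [HUo [HUy _]]. auto.
    - intros z Uz. apply HWV, (HU n), Uz.
    - intros A B HA NA HAU HB NB HBU. apply NNPP; intro Hnj.
      apply Hgood. exists (A, B). simpl. tauto. }
  destruct (choice _ Hbad) as [AB HAB].
  assert (Hpts : forall n, exists ab : Y * Y, fst (AB n) (fst ab) /\ snd (AB n) (snd ab)).
  { intro n. destruct (HAB n) as [[_ [[a Ha] _]] [[_ [[b Hb] _]] _]]. now exists (a, b). }
  destruct (choice _ Hpts) as [ab Hab].
  assert (Hsub : forall n, U n (fst (ab n)) /\ U n (snd (ab n))).
  { intro n. destruct (HAB n) as [[_ [_ HAU]] [[_ [_ HBU]] _]], (Hab n) as [Ha Hb].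
    split; auto. }
  destruct (shrinking_pairs_joined W y (fun n => fst (AB n)) (fun n => snd (AB n))
    (fun n => fst (ab n)) (fun n => snd (ab n)) HHB HW Wy) as [n Hn].
  - intro n. split; [apply (HAB n)|]. split; [apply (Hab n)|apply (HU n), (Hsub n)].
  - intro n. split; [apply (HAB n)|]. split; [apply (Hab n)|apply (HU n), (Hsub n)].
  - apply HUconv. intro n. apply (Hsub n).
  - apply HUconv. intro n. apply (Hsub n).
  - apply (proj2 (proj2 (HAB n))).
    apply (joined_by_arc_in_mono _ _ (closure tY W)); [|exact Hn].
    intro z. apply closure_monotone, HWV.
Qed.

End SpaceY.

Theorem mainTheorem11 (Y : Type) (tY : topology Y) :
  first_countable tY ->
  (forall f : I01 -> Y, Hclass1 tY f -> Bclass1 tY f) ->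
  almost_arcwise_connected tY /\ loc_almost_arcwise_connected tY.
Proof.
  intros HFC HHB. split.
  - exact (almost_arcwise_connected_of_H1_B1 tY HHB).
  - exact (loc_almost_arcwise_connected_of_H1_B1 tY HFC HHB).
Qed.
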